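(* Let $q$ be a prime power with $q\equiv 1 \pmod 3$, let $\delta\in\mathbb{F}_q$ be a cubic nonresidue, and let $\mathbb{F}_q(\delta^{1/3})$ be the cubic extension with $\mathbb{F}_q$-basis $\{1,\delta^{1/3},\delta^{2/3}\}$; write $\alpha=\alpha_1+\alpha_2\delta^{1/3}+\alpha_3\delta^{2/3}$ with $\alpha_i\in\mathbb{F}_q$. Let $\mathbb{H}_q=\{(\alpha,\beta)\in \mathbb{F}_q(\delta^{1/3})^2 : \alpha_2\beta_3-\alpha_3\beta_2\neq 0\}$ with the action of $\mathrm{GL}_3(\mathbb{F}_q)$ given by \[ \begin{bmatrix} a & b & c\\ d & e & f\\ r & s & t \end{bmatrix} (\alpha,\beta) = \left(\frac{a\alpha+b\beta+c}{r\alpha+s\beta+t}, \frac{d\alpha+e\beta+f}{r\alpha+s\beta+t} \right). \] Let $B\le\mathrm{GL}_3(\mathbb{F}_q)$ be the Borel subgroup of invertible upper-triangular matrices. Then \[\{(\delta^{1/3},\,v\delta^{1/3}+\delta^{2/3}) : v\in\mathbb{F}_q\}\ \sqcup\ \{(\delta^{2/3},\,\delta^{1/3})\}\] is a fundamental domain for the action of $B$ on $\mathbb{H}_q$.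
   Context: A fundamental domain for the action of a subgroup $H$ on $\mathbb{H}_q$ is a subset of $\mathbb{H}_q$ containing exactly one element of each $H$-orbit. A cubic nonresidue is an element of $\mathbb{F}_q^\times$ that is not a cube in $\mathbb{F}_q$. *)

From HB Require Import structures.
From mathcomp Require Import all_boot all_order all_algebra all_field.
Set Implicit Arguments. Unset Strict Implicit. Unset Printing Implicit Defensive.
Import GRing.Theory.
Local Open Scope ring_scope.

Section Cubic.
Variables (F : fieldType) (L : fieldExtType F) (d : L).

(* the F-basis {1, delta^(1/3), delta^(2/3)} where d plays delta^(1/3) *)
Definition cbasis : 3.-tuple L := [tuple 1; d; d ^+ 2].

Definition o0 : 'I_3 := @Ordinal 3 0 isT.
Definition o1 : 'I_3 := @Ordinal 3 1 isT.
Definition o2 : 'I_3 := @Ordinal 3 2 isT.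

(* coordinates: x = x_1 + x_2 d + x_3 d^2; cc x o0 = x_1, cc x o1 = x_2, cc x o2 = x_3 *)
Definition cc (x : L) (i : 'I_3) : F := coord cbasis i x.

Definition inHq (p : L * L) : Prop :=
  cc p.1 o1 * cc p.2 o2 - cc p.1 o2 * cc p.2 o1 != 0.

Definition act (g : 'M[F]_3) (p : L * L) : L * L :=
  let den := g o2 o0 *: p.1 + g o2 o1 *: p.2 + (g o2 o2)%:A in
  ((g o0 o0 *: p.1 + g o0 o1 *: p.2 + (g o0 o2)%:A) / den,
   (g o1 o0 *: p.1 + g o1 o1 *: p.2 + (g o1 o2)%:A) / den).

Definition inBorel (g : 'M[F]_3) : Prop :=
  g \in unitmx /\ forall i j : 'I_3, (j < i)%N -> g i j = 0.

Definition fundamental_domain (H : 'M[F]_3 -> Prop) (X D : L * L -> Prop) : Prop :=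
  (forall y, D y -> X y) /\
  (forall x, X x -> exists! y, D y /\ exists g, H g /\ act g x = y).

Definition candD (y : L * L) : Prop :=
  (exists v : F, y = (d, v *: d + d ^+ 2)) \/ y = (d ^+ 2, d).

End Cubic.

From HB Require Import structures.
From mathcomp Require Import all_boot all_order all_algebra all_field.
From mathcomp Require Import ring.
Import GRing.Theory.
Local Open Scope ring_scope.

(* An upper-triangular g has r = s = 0, so it acts affinely:
   (alpha, beta) |-> ((a alpha + b beta + c) / t, (e beta + f) / t).
   On the d- and d^2-coordinates of beta this is scaling by e/t, hence whether
   beta_3 vanishes and, if not, the ratio beta_2 / beta_3 are orbit invariants,
   and they single out one element of the candidate set.  Conversely, since
   alpha_2 beta_3 - alpha_3 beta_2 <> 0, the pairs (alpha_2, alpha_3) and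
   (beta_2, beta_3) are independent, so a and b can be chosen to move alpha to
   d or d^2, while c and f absorb the constant coordinates. *)

Lemma det_upper (R : comPzRingType) n (A : 'M[R]_n) :
  (forall i j : 'I_n, (j < i)%N -> A i j = 0) -> \det A = \prod_i A i i.
Proof.
move=> A_up; rewrite -det_tr det_trig; last first.
  by apply/is_trig_mxP => i j lt_ij; rewrite mxE A_up.
by apply: eq_bigr => i _; rewrite mxE.
Qed.

Lemma upper_unitmxP {F : fieldType} {n} {A : 'M[F]_n} :
  (forall i j : 'I_n, (j < i)%N -> A i j = 0) ->
  reflect (forall i, A i i != 0) (A \in unitmx).
Proof.
move=> A_up; rewrite unitmxE det_upper // unitfE.
by apply: (iffP (prodf_neq0 _ _)) => nz i *; apply: nz.
Qed.

Lemma inBorel_diag_neq0 {F : fieldType} {g : 'M[F]_3} : inBorel g -> forall i, g i i != 0.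
Proof. by case=> g_unit g_up; move: g_unit => /(upper_unitmxP g_up). Qed.

Definition borel_mx {F : fieldType} (a b c e f : F) : 'M[F]_3 :=
  \matrix_(i, j) nth 0 (nth [::] [:: [:: a; b; c]; [:: 0; e; f]; [:: 0; 0; 1]] i) j.

Lemma borel_mx_Borel (F : fieldType) (a b c e f : F) :
  a != 0 -> e != 0 -> inBorel (borel_mx a b c e f).
Proof.
move=> a0 e0; have up : forall i j : 'I_3, (j < i)%N -> borel_mx a b c e f i j = 0.
  by move=> [[|[|[|//]]] ?] [[|[|[|//]]] ?] //= _; rewrite mxE.
by split=> //; apply/(upper_unitmxP up) => -[[|[|[|//]]] ?]; rewrite mxE //= oner_eq0.
Qed.

Lemma act_borel_mx (F : fieldType) (L : fieldExtType F) (a b c e f : F) (x : L * L) :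
  act (borel_mx a b c e f) x = (a *: x.1 + b *: x.2 + c%:A, e *: x.2 + f%:A).
Proof. by rewrite /act !mxE /= !scale0r !add0r scale1r !divr1. Qed.

Section BorelOrbits.
Variables (F : fieldType) (L : fieldExtType F) (d : L).
Hypothesis d_basis : basis_of fullv (cbasis d).

Lemma ccD u v i : cc d (u + v) i = cc d u i + cc d v i.
Proof. exact: linearD. Qed.

Lemma ccZ k u i : cc d (k *: u) i = k * cc d u i.
Proof. exact: linearZ. Qed.

Lemma cc_cbasis (j i : 'I_3) : cc d (cbasis d)`_j i = (j == i)%:R.
Proof. exact: (coord_free j i (basis_free d_basis)). Qed.

Lemma cc1 i : cc d 1 i = (o0 == i)%:R.
Proof. exact: (cc_cbasis o0). Qed.

Lemma cc_d i : cc d d i = (o1 == i)%:R.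
Proof. exact: (cc_cbasis o1). Qed.

Lemma cc_d2 i : cc d (d ^+ 2) i = (o2 == i)%:R.
Proof. exact: (cc_cbasis o2). Qed.

Local Notation ccE := (ccD, ccZ, cc1, cc_d, cc_d2).

Lemma cc_inj u v :
  cc d u o0 = cc d v o0 -> cc d u o1 = cc d v o1 -> cc d u o2 = cc d v o2 -> u = v.
Proof.
move=> e0 e1 e2.
rewrite (coord_basis d_basis (memvf u)) (coord_basis d_basis (memvf v)).
apply: eq_bigr => -[[|[|[|//]]] i_lt3] _; congr (_ *: _).
- by have -> : Ordinal i_lt3 = o0 by apply: val_inj.
- by have -> : Ordinal i_lt3 = o1 by apply: val_inj.
- by have -> : Ordinal i_lt3 = o2 by apply: val_inj.
Qed.

Lemma act_Borel_snd (g : 'M[F]_3) (x : L * L) : inBorel g ->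
  (act g x).2 = (g o2 o2)^-1 *: (g o1 o1 *: x.2 + (g o1 o2)%:A).
Proof.
case=> _ g_up; rewrite /act /= (g_up o2 o0) // (g_up o2 o1) // (g_up o1 o0) //.
by rewrite !scale0r !add0r -(fmorphV (in_alg L)) mulr_algr.
Qed.

Definition orbit_rep (x : L * L) : L * L :=
  if cc d x.2 o2 == 0 then (d ^+ 2, d)
  else (d, (cc d x.2 o1 / cc d x.2 o2) *: d + d ^+ 2).

Lemma orbit_rep_Borel x (g : 'M[F]_3) : inBorel g -> orbit_rep (act g x) = orbit_rep x.
Proof.
move=> g_B; have t0 := inBorel_diag_neq0 g_B o2; have e0 := inBorel_diag_neq0 g_B o1.
rewrite /orbit_rep act_Borel_snd // !ccE /= !(mulr0, addr0).
rewrite !mulf_eq0 invr_eq0 (negbTE t0) (negbTE e0) /=.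
by case: eqP => // /eqP b3_neq0; congr (_, _ *: _ + _); field; rewrite b3_neq0 t0 e0.
Qed.

Lemma orbit_rep_candD y : candD d y -> orbit_rep y = y.
Proof.
case=> [[v ->]|->]; rewrite /orbit_rep /= !ccE /= ?(mulr0, mulr1, addr0, add0r).
  by rewrite oner_eq0 divr1.
by rewrite eqxx.
Qed.

Lemma candD_orbit_rep x : candD d (orbit_rep x).
Proof. by rewrite /orbit_rep; case: ifP => _; [right | left; eexists]. Qed.

Lemma inHq_candD y : candD d y -> inHq d y.
Proof.
by case=> [[v ->]|->]; rewrite /inHq /= !ccE /=
  ?(mulr0, mul0r, mulr1, addr0, add0r, subr0, sub0r, oppr_eq0) oner_eq0.
Qed.

Lemma orbit_rep_reached x : inHq d x -> exists g, inBorel g /\ act g x = orbit_rep x.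
Proof.
case: x => al be; rewrite /inHq /orbit_rep /=.
have [b3_0|b3_neq0] := eqVneq (cc d be o2) 0 => hx.
  move: hx; rewrite b3_0 mulr0 sub0r oppr_eq0 mulf_eq0 negb_or => /andP[a3_neq0 b2_neq0].
  pose a := (cc d al o2)^-1; pose b := - cc d al o1 / (cc d al o2 * cc d be o1).
  pose e := (cc d be o1)^-1.
  exists (borel_mx a b (- (a * cc d al o0 + b * cc d be o0)) e (- e * cc d be o0)).
  split; first by apply: borel_mx_Borel; rewrite invr_eq0.
  rewrite act_borel_mx; congr pair; apply: cc_inj; rewrite !ccE /= ?b3_0 /a /b /e;
    by field; rewrite ?a3_neq0 ?b2_neq0.
pose D := cc d al o1 * cc d be o2 - cc d al o2 * cc d be o1.
pose a := cc d be o2 / D; pose b := - cc d al o2 / D; pose e := (cc d be o2)^-1.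
exists (borel_mx a b (- (a * cc d al o0 + b * cc d be o0)) e (- e * cc d be o0)).
split; first by apply: borel_mx_Borel; rewrite ?mulf_neq0 ?invr_eq0.
rewrite act_borel_mx; congr pair; apply: cc_inj; rewrite !ccE /= /a /b /e /D;
  by field; rewrite ?hx ?b3_neq0.
Qed.

Lemma Borel_fundamental_domain : fundamental_domain (@inBorel F) (inHq d) (candD d).
Proof.
split=> [|x hx]; first exact: inHq_candD.
exists (orbit_rep x); split; first by split; [exact: candD_orbit_rep | exact: orbit_rep_reached].
by move=> y [Dy [g [g_B gx_y]]]; rewrite -(orbit_rep_Borel x _ g_B) gx_y orbit_rep_candD.
Qed.

End BorelOrbits.

Theorem proposition5p2 (F : finFieldType) (delta : F)
    (hq : (#|F| %% 3 = 1)%N)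
    (hdelta0 : delta != 0)
    (hnoncube : ~ exists x : F, x ^+ 3 = delta)
    (L : fieldExtType F) (d : L)
    (hd : d ^+ 3 = delta%:A)
    (hbasis : basis_of fullv (cbasis d)) :
  fundamental_domain (@inBorel F) (inHq d) (candD d).
Proof. exact: Borel_fundamental_domain hbasis. Qed.
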